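(* Let $q\ge 2$ be an integer, $s\in(0,2)$, and let $P(x,t)=|\Psi(x,t)|^2$ be as in the context. Put $\langle x\rangle(t)=\int_0^\pi x\,P(x,t)\,dx$. If $q$ is even, then $$\langle x\rangle(t)=\frac{\pi}{2}-\frac{16}{\pi}\big(1-q^{2(s-2)}\big)\sum_{k=1}^{\infty}\frac{q^{k(s-1)}}{(q^{2k}-1)^2}\cos\big((q^{2k}-1)t\big),$$ and $\langle x\rangle$ is continuously differentiable, with $$\frac{d\langle x\rangle}{dt}(t)=\frac{16}{\pi}\big(1-q^{2(s-2)}\big)\sum_{k=1}^\infty\frac{q^{k(s-1)}}{q^{2k}-1}\sin\big((q^{2k}-1)t\big),$$ an absolutely and uniformly convergent series. If $q$ is odd, then $\langle x\rangle(t)=\pi/2$ for all $t$.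
   Context: For an integer $q\ge2$ and $s\in(0,2)$ define, for $x\in[0,\pi]$ and $t\in\mathbb R$, $$\Psi(x,t)=N\sum_{n=0}^{\infty} q^{n(s-2)}\sin(q^n x)\,e^{-i q^{2n} t},\qquad N=\sqrt{\tfrac{2}{\pi}\big(1-q^{2(s-2)}\big)},$$ and let $P(x,t)=|\Psi(x,t)|^2$. *)

From Stdlib Require Import Reals Lra.
From Coquelicot Require Import Coquelicot.
Open Scope R_scope.

Definition amp (q : nat) (s : R) (n : nat) : R := Rpower (INR q) (INR n * (s - 2)).

Definition Nc (q : nat) (s : R) : R :=
  sqrt (2 / PI * (1 - Rpower (INR q) (2 * (s - 2)))).

(* Psi(x,t) = N sum_n q^{n(s-2)} sin(q^n x) e^{-i q^{2n} t}; since
   e^{-i a} = cos a - i sin a, its real and imaginary parts are: *)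
Definition RePsi (q : nat) (s x t : R) : R :=
  Nc q s * Series (fun n => amp q s n * sin (INR q ^ n * x) * cos (INR q ^ (2 * n) * t)).
Definition ImPsi (q : nat) (s x t : R) : R :=
  - (Nc q s * Series (fun n => amp q s n * sin (INR q ^ n * x) * sin (INR q ^ (2 * n) * t))).

Definition Pdens (q : nat) (s x t : R) : R := RePsi q s x t ^ 2 + ImPsi q s x t ^ 2.

Definition xmean (q : nat) (s t : R) : R := RInt (fun x => x * Pdens q s x t) 0 PI.

Definition Ccoef (q : nat) (s : R) : R := 16 / PI * (1 - Rpower (INR q) (2 * (s - 2))).

(* terms for k >= 1 (index shifted: term j corresponds to k = j+1) *)
Definition xm_cos_term (q : nat) (s t : R) (j : nat) : R :=
  let k := S j in
  Rpower (INR q) (INR k * (s - 1)) / (INR q ^ (2 * k) - 1) ^ 2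
    * cos ((INR q ^ (2 * k) - 1) * t).
Definition xm_sin_term (q : nat) (s t : R) (j : nat) : R :=
  let k := S j in
  Rpower (INR q) (INR k * (s - 1)) / (INR q ^ (2 * k) - 1)
    * sin ((INR q ^ (2 * k) - 1) * t).

From Stdlib Require Import Reals Lra Lia Ranalysis5.
From Coquelicot Require Import Coquelicot.
Open Scope R_scope.

(* Write Psi = N * sum_n r^n e^(-i w_n^2 t) sin (w_n x) with r = q^(s-2) < 1 and
   w_n = q^n.  The coefficients decay geometrically, so truncating the series after
   M terms costs O(r^M), uniformly in x and t.  For a truncation, the integral of
   x |Psi_M|^2 over [0, pi] is a finite sum: each diagonal term contributes pi^2/4
   times the squared modulus of its coefficient, and the cross term of w_m and w_n
   is ((-1)^(w_m + w_n) - 1)/2 * (1/(w_m - w_n)^2 - 1/(w_m + w_n)^2).  The cross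
   terms vanish unless w_m + w_n is odd: never when q is odd, and only for the pairs
   (0, k) when q is even.  With N^2 the diagonal geometric series gives pi/2, and the
   pairs (0, k) give the cosine series, whose termwise derivative is again
   geometrically dominated. *)

Lemma div_unit_interval a D : 0 <= a <= D -> 0 < D -> 0 <= a / D <= 1.
Proof.
  intros Ha HD. split; [apply Rdiv_le_0_compat; lra|].
  unfold Rdiv. rewrite <- (Rinv_r D) by lra.
  apply Rmult_le_compat_r; [left; apply Rinv_0_lt_compat|]; lra.
Qed.

Lemma Rabs_mult_unit_le A c y : 0 <= A -> Rabs c <= 1 -> Rabs y <= 1 -> Rabs (A * c * y) <= A.
Proof.
  intros HA Hc Hy. rewrite !Rabs_mult, (Rabs_pos_eq A) by lra.
  assert (Hcy : Rabs c * Rabs y <= 1 * 1) by (apply Rmult_le_compat; auto using Rabs_pos).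
  rewrite Rmult_assoc. nra.
Qed.

Lemma Rabs_sin_le_1 y : Rabs (sin y) <= 1.
Proof. apply Rabs_le, SIN_bound. Qed.

Lemma Rabs_cos_le_1 y : Rabs (cos y) <= 1.
Proof. apply Rabs_le, COS_bound. Qed.

Lemma pow_neg1_even N : (-1) ^ N = if Nat.even N then 1 else -1.
Proof.
  induction N as [|N IH]; [reflexivity|].
  rewrite Nat.even_succ, <- Nat.negb_even. simpl. rewrite IH.
  destruct (Nat.even N); simpl; ring.
Qed.

Lemma sin_cos_INR_mult_PI N : sin (INR N * PI) = 0 /\ cos (INR N * PI) = (-1) ^ N.
Proof.
  induction N as [|N [Hs Hc]]; [simpl; rewrite Rmult_0_l, sin_0, cos_0; auto|].
  rewrite S_INR, Rmult_plus_distr_r, Rmult_1_l, sin_plus, cos_plus, sin_PI, cos_PI, Hs, Hc.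
  simpl. split; ring.
Qed.

Lemma Rabs_sqr_sub_le A B c e : Rabs (A - B) <= e -> Rabs A <= c -> e <= c ->
  Rabs (A ^ 2 - B ^ 2) <= 3 * c * e.
Proof.
  intros H1 H2 H3. replace (A ^ 2 - B ^ 2) with ((A - B) * (2 * A - (A - B))) by ring.
  rewrite Rabs_mult. pose proof (Rabs_pos (A - B)).
  assert (Rabs (2 * A - (A - B)) <= 3 * c).
  { eapply Rle_trans; [apply Rabs_triang|].
    rewrite Rabs_Ropp, Rabs_mult, (Rabs_pos_eq 2) by lra. lra. }
  pose proof (Rabs_pos (2 * A - (A - B))). nra.
Qed.

(* The sum of the first [M] terms; unlike [sum_n], it has an empty case. *)
Fixpoint psum (a : nat -> R) (M : nat) : R :=
  match M with O => 0 | S m => psum a m + a m end.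

Lemma psum_sum_n a m : psum a (S m) = sum_n a m.
Proof.
  induction m as [|m IH]; [simpl; rewrite sum_O; ring|].
  rewrite sum_Sn. change (psum a (S m) + a (S m) = plus (sum_n a m) (a (S m))).
  now rewrite IH.
Qed.

Lemma psum_ext (f g : nat -> R) M : (forall n, (n < M)%nat -> f n = g n) -> psum f M = psum g M.
Proof. induction M; intros H; simpl; auto. rewrite IHM, H; auto. Qed.

Lemma psum_const0 M : psum (fun _ => 0) M = 0.
Proof. induction M; simpl; [auto|rewrite IHM; ring]. Qed.

Lemma psum_lin (f g : nat -> R) al be M :
  psum (fun n => al * f n + be * g n) M = al * psum f M + be * psum g M.
Proof. induction M; simpl; [ring|rewrite IHM; ring]. Qed.

Lemma psum_head f M : (forall n, (1 <= n)%nat -> f n = 0) -> psum f (S M) = f 0%nat.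
Proof.
  intros H. induction M; [simpl; ring|].
  change (psum f (S M) + f (S M) = f 0%nat). rewrite IHM, (H (S M)) by lia. ring.
Qed.

Section GeometricDomination.
Variable r : R.
Hypothesis Hr : 0 <= r < 1.

Lemma pow_le_1 n : r ^ n <= 1.
Proof. destruct n; [simpl; lra | left; apply pow_lt_1_compat; [lra | lia]]. Qed.

Lemma is_series_geom_scal K : is_series (fun n => K * r ^ n) (K / (1 - r)).
Proof.
  apply (@is_series_scal_l R_AbsRing R_NormedModule K (fun n => r ^ n)), is_series_geom.
  rewrite Rabs_pos_eq; lra.
Qed.

Lemma ex_series_Rabs_geom_dom (a : nat -> R) K :
  (forall n, Rabs (a n) <= K * r ^ n) -> ex_series (fun n => Rabs (a n)).
Proof.
  intros Ha. apply (@ex_series_le R_AbsRing R_CompleteNormedModule _ (fun n => K * r ^ n)).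
  - intros n. unfold norm; simpl. unfold abs; simpl. rewrite Rabs_Rabsolu. auto.
  - eexists. apply is_series_geom_scal.
Qed.

Lemma Series_geom_dom (a : nat -> R) K :
  (forall n, Rabs (a n) <= K * r ^ n) -> Rabs (Series a) <= K / (1 - r).
Proof.
  intros Ha. pose proof (ex_series_Rabs_geom_dom a K Ha) as Habs.
  eapply Rle_trans; [apply Series_Rabs, Habs|].
  rewrite <- (is_series_unique _ _ (is_series_geom_scal K)).
  apply Series_le; [|eexists; apply is_series_geom_scal].
  intros n. split; [apply Rabs_pos | apply Ha].
Qed.

Lemma Series_minus_psum_geom_dom (a : nat -> R) K :
  (forall n, Rabs (a n) <= K * r ^ n) ->
  forall M, Rabs (Series a - psum a M) <= K * r ^ M / (1 - r).
Proof.
  intros Ha [|m].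
  - simpl. rewrite Rminus_0_r, Rmult_1_r. now apply Series_geom_dom.
  - assert (Hex : ex_series a) by apply ex_series_Rabs, (ex_series_Rabs_geom_dom a K Ha).
    rewrite (Series_incr_n a (S m)), psum_sum_n, sum_n_Reals by lia || exact Hex.
    simpl pred. replace (sum_f_R0 a m + _ - sum_f_R0 a m)
      with (Series (fun k => a (S m + k)%nat)) by ring.
    apply Series_geom_dom. intros n. rewrite Rmult_assoc, <- pow_add. apply Ha.
Qed.

Lemma geom_eventually_lt K eps : 0 < eps -> exists N, forall n, (N <= n)%nat -> K * r ^ n < eps.
Proof.
  intros He. pose proof (Rabs_pos K) as HK.
  destruct (pow_lt_1_zero r ltac:(rewrite Rabs_pos_eq; lra) (eps / (Rabs K + 1)))
    as [N HN]; [apply Rdiv_lt_0_compat; lra|].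
  exists N. intros n Hn. specialize (HN n Hn).
  assert (Hrn : 0 <= r ^ n) by (apply pow_le; lra).
  rewrite Rabs_pos_eq in HN by exact Hrn.
  apply Rmult_lt_compat_l with (r := Rabs K + 1) in HN; [|lra].
  replace ((Rabs K + 1) * (eps / (Rabs K + 1))) with eps in HN by (field; lra).
  pose proof (Rmult_le_compat_r _ _ _ Hrn (RRle_abs K)). nra.
Qed.

Lemma eq_of_geom_approx X Y (u : nat -> R) C1 C2 :
  (forall M, Rabs (X - u M) <= C1 * r ^ M) -> (forall M, Rabs (u M - Y) <= C2 * r ^ M) -> X = Y.
Proof.
  intros H1 H2. destruct (Req_dec X Y) as [|Hn]; auto.
  destruct (geom_eventually_lt (C1 + C2) (Rabs (X - Y))) as [N HN]; [apply Rabs_pos_lt; lra|].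
  specialize (HN N (le_n _)). specialize (H1 N). specialize (H2 N).
  pose proof (Rabs_triang (X - u N) (u N - Y)).
  replace (X - u N + (u N - Y)) with (X - Y) in * by ring. lra.
Qed.

Lemma psum_unif_geom_dom (h : nat -> R -> R) K :
  (forall n x, Rabs (h n x) <= K * r ^ n) ->
  forall eps, 0 < eps -> exists N, forall n y, (N <= n)%nat ->
    Rabs (Series (fun k => h k y) - psum (fun k => h k y) n) < eps.
Proof.
  intros Hh eps Heps. destruct (geom_eventually_lt (K / (1 - r)) eps Heps) as [N HN].
  exists N. intros n y Hn. eapply Rle_lt_trans.
  - apply (Series_minus_psum_geom_dom (fun k => h k y) K (fun k => Hh k y)).
  - replace (K * r ^ n / (1 - r)) with (K / (1 - r) * r ^ n) by (field; lra). auto.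
Qed.

Lemma CVU_psum_geom_dom (h : nat -> R -> R) K c (d : posreal) :
  (forall n x, Rabs (h n x) <= K * r ^ n) ->
  CVU (fun M y => psum (fun n => h n y) M) (fun y => Series (fun n => h n y)) c d.
Proof.
  intros Hh eps Heps. destruct (psum_unif_geom_dom h K Hh eps Heps) as [N HN].
  exists N. intros n y Hn _. auto.
Qed.

Lemma continuous_Series_geom_dom (h : nat -> R -> R) K :
  (forall n x, Rabs (h n x) <= K * r ^ n) -> (forall n x, continuous (h n) x) ->
  forall x, continuous (fun y => Series (fun n => h n y)) x.
Proof.
  intros Hh Hc x. apply continuity_pt_filterlim.
  assert (Hd : 0 < Rabs x + 1) by (pose proof (Rabs_pos x); lra).
  apply (CVU_continuity (fun M y => psum (fun n => h n y) M) _ 0 (mkposreal _ Hd)).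
  - apply (CVU_psum_geom_dom h K _ _ Hh).
  - intros M y _. apply continuity_pt_filterlim. induction M as [|M IH]; simpl.
    + apply continuous_const.
    + apply (continuous_plus (fun y => psum (fun n => h n y) M) (h M)); auto.
  - unfold Boule; simpl. rewrite Rminus_0_r. lra.
Qed.

Lemma is_derive_Series_geom_dom (h h' : nat -> R -> R) K :
  (forall n x, Rabs (h n x) <= K * r ^ n) -> (forall n x, Rabs (h' n x) <= K * r ^ n) ->
  (forall n x, is_derive (h n) x (h' n x)) -> (forall n x, continuous (h' n) x) ->
  forall x, is_derive (fun y => Series (fun n => h n y)) x (Series (fun n => h' n x)).
Proof.
  intros Hh Hh' Hd Hc x. apply is_derive_Reals.
  assert (Hd0 : 0 < Rabs x + 1) by (pose proof (Rabs_pos x); lra).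
  apply (derivable_pt_lim_CVU (fun M y => psum (fun n => h n y) M)
     (fun M y => psum (fun n => h' n y) M) _ (fun y => Series (fun n => h' n y)) x 0 (mkposreal _ Hd0)).
  - unfold Boule; simpl. rewrite Rminus_0_r. lra.
  - intros y M _. apply is_derive_Reals. induction M as [|M IH]; simpl.
    + apply (is_derive_const 0).
    + apply (is_derive_plus (fun y => psum (fun n => h n y) M) (h M)); auto.
  - intros y _ eps Heps. destruct (psum_unif_geom_dom h K Hh eps Heps) as [N HN].
    exists N. intros n Hn. unfold Rdist. rewrite Rabs_minus_sym. auto.
  - apply (CVU_psum_geom_dom h' K _ _ Hh').
  - intros y _. apply continuity_pt_filterlim.
    apply (continuous_Series_geom_dom h' K Hh' Hc).
Qed.
End GeometricDomination.

Lemma continuous_x_sum_sqr (f g : R -> R) x : continuous f x -> continuous g x ->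
  continuous (fun y => y * (f y ^ 2 + g y ^ 2)) x.
Proof.
  intros Hf Hg.
  assert (Hsq : forall h : R -> R, continuous h x -> continuous (fun y => h y ^ 2) x).
  { intros h Hh. apply (continuous_ext (fun y => h y * h y)); [intros; simpl; ring|].
    now apply (continuous_mult h h). }
  apply (continuous_mult (fun y => y) (fun y => f y ^ 2 + g y ^ 2)); [apply continuous_id|].
  apply (continuous_plus (fun y => f y ^ 2) (fun y => g y ^ 2)); auto.
Qed.

Lemma is_RInt_lin (f g h : R -> R) a b If Ig al be v : is_RInt f a b If -> is_RInt g a b Ig ->
  (forall x, h x = al * f x + be * g x) -> v = al * If + be * Ig -> is_RInt h a b v.
Proof.
  intros Hf Hg Hh ->.
  apply (is_RInt_ext (fun x => plus (scal al (f x)) (scal be (g x)))).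
  - intros x _. rewrite Hh. reflexivity.
  - apply (@is_RInt_plus R_NormedModule); apply (@is_RInt_scal R_NormedModule); auto.
Qed.

Lemma is_RInt_zero (f : R -> R) a b : (forall x, f x = 0) -> is_RInt f a b 0.
Proof.
  intros Hf. apply (is_RInt_ext (fun _ => 0)); [intros x _; auto|].
  pose proof (@is_RInt_const R_NormedModule a b 0) as H.
  unfold scal in H; simpl in H; unfold mult in H; simpl in H.
  rewrite Rmult_0_r in H. exact H.
Qed.

Lemma is_RInt_x_sin_sin j l : j - l <> 0 -> j + l <> 0 -> sin (j * PI) = 0 -> sin (l * PI) = 0 ->
  is_RInt (fun x => x * sin (j * x) * sin (l * x)) 0 PI
    ((cos (j * PI) * cos (l * PI) - 1) / 2 * (/ (j - l) ^ 2 - / (j + l) ^ 2)).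
Proof.
  intros Hd Hs Hj Hl.
  set (A := fun x => / 2 * (x * sin (j * x - l * x) / (j - l) + cos (j * x - l * x) / (j - l) ^ 2
            - x * sin (j * x + l * x) / (j + l) - cos (j * x + l * x) / (j + l) ^ 2)).
  replace ((cos (j * PI) * cos (l * PI) - 1) / 2 * _) with (minus (A PI) (A 0)).
  - apply (@is_RInt_derive R_CompleteNormedModule).
    + intros x _. unfold A. auto_derive; [tauto|].
      replace (j * x + - (l * x)) with (j * x - l * x) by ring.
      rewrite sin_minus, cos_minus, sin_plus, cos_plus. field. auto.
    + intros x _. apply (@ex_derive_continuous R_AbsRing R_NormedModule). auto_derive. auto.
  - unfold A, minus, plus, opp; simpl.
    rewrite sin_minus, cos_minus, sin_plus, cos_plus, Hj, Hl.
    replace (j * 0 - l * 0) with 0 by ring. replace (j * 0 + l * 0) with 0 by ring.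
    rewrite cos_0. field. auto.
Qed.

Lemma is_RInt_x_sin_sqr j : j <> 0 -> sin (j * PI) = 0 ->
  is_RInt (fun x => x * sin (j * x) * sin (j * x)) 0 PI (PI ^ 2 / 4).
Proof.
  intros Hj Hs.
  set (B := fun x => x ^ 2 / 4 - (x * sin (2 * (j * x)) / (2 * j) + cos (2 * (j * x)) / (4 * j ^ 2)) / 2).
  replace (PI ^ 2 / 4) with (minus (B PI) (B 0)).
  - apply (@is_RInt_derive R_CompleteNormedModule).
    + intros x _. unfold B. auto_derive; [tauto|].
      rewrite cos_2a_sin. field. auto.
    + intros x _. apply (@ex_derive_continuous R_AbsRing R_NormedModule). auto_derive. auto.
  - unfold B, minus, plus, opp; simpl.
    rewrite sin_2a, cos_2a_sin, Hs.
    replace (2 * (j * 0)) with 0 by ring. rewrite cos_0. field. auto.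
Qed.

Section SinePolynomials.
Variables (w : nat -> R) (I : nat -> nat -> R).
Hypothesis Hdiag : forall n, is_RInt (fun x => x * sin (w n * x) * sin (w n * x)) 0 PI (PI ^ 2 / 4).
Hypothesis Hoff : forall m n, m <> n -> is_RInt (fun x => x * sin (w m * x) * sin (w n * x)) 0 PI (I m n).

Definition sin_psum (c : nat -> R) (M : nat) (x : R) : R := psum (fun n => c n * sin (w n * x)) M.

Lemma is_RInt_x_sin_sin_psum (c : nat -> R) m M : (M <= m)%nat ->
  is_RInt (fun x => x * sin (w m * x) * sin_psum c M x) 0 PI (psum (fun n => c n * I n m) M).
Proof.
  induction M as [|M IH]; intros HM.
  - apply is_RInt_zero. intros x. unfold sin_psum; simpl; ring.
  - apply (is_RInt_lin _ _ _ _ _ _ _ 1 (c M) _ (IH ltac:(lia)) (Hoff M m ltac:(lia))).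
    + intros x. unfold sin_psum; simpl. ring.
    + simpl. ring.
Qed.

Definition sin_psum_sqr_int (b b' : nat -> R) (M : nat) : R :=
  PI ^ 2 / 4 * psum (fun n => b n ^ 2 + b' n ^ 2) M +
  2 * psum (fun m => psum (fun n => (b n * b m + b' n * b' m) * I n m) m) M.

Lemma is_RInt_x_sin_psum_sqr (b b' : nat -> R) M :
  is_RInt (fun x => x * (sin_psum b M x ^ 2 + sin_psum b' M x ^ 2)) 0 PI (sin_psum_sqr_int b b' M).
Proof.
  induction M as [|M IH].
  - replace (sin_psum_sqr_int b b' 0) with 0 by (unfold sin_psum_sqr_int; simpl; ring).
    apply is_RInt_zero. intros x. unfold sin_psum; simpl; ring.
  - pose proof (is_RInt_lin _ _ _ _ _ _ _ (2 * b M) (2 * b' M) _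
      (is_RInt_x_sin_sin_psum b M M (le_n _)) (is_RInt_x_sin_sin_psum b' M M (le_n _))
      (fun x => eq_refl) eq_refl) as Hcross.
    pose proof (is_RInt_lin _ _ _ _ _ _ _ 1 1 _ IH Hcross (fun x => eq_refl) eq_refl) as Hold.
    apply (is_RInt_lin _ _ _ _ _ _ _ 1 (b M ^ 2 + b' M ^ 2) _ Hold (Hdiag M)).
    + intros x. unfold sin_psum; simpl. fold (sin_psum b M x) (sin_psum b' M x). ring.
    + assert (E : psum (fun n => (b n * b M + b' n * b' M) * I n M) M =
         b M * psum (fun n => b n * I n M) M + b' M * psum (fun n => b' n * I n M) M).
      { rewrite <- psum_lin. apply psum_ext. intros; ring. }
      unfold sin_psum_sqr_int; simpl. rewrite E. ring.
Qed.
End SinePolynomials.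

Section Model.
Variables (q : nat) (s : R).
Hypothesis Hq : (2 <= q)%nat.
Hypothesis Hs : s < 2.

Let r := Rpower (INR q) (s - 2).
Let w n := INR q ^ n.

Lemma INR_q_gt_1 : 1 < INR q.
Proof. apply le_INR in Hq. simpl in Hq. lra. Qed.

Lemma r_range : 0 <= r < 1.
Proof.
  unfold r, Rpower. split; [left; apply exp_pos|].
  rewrite <- exp_0. apply exp_increasing.
  assert (0 < ln (INR q)) by (rewrite <- ln_1; apply ln_increasing; pose proof INR_q_gt_1; lra).
  nra.
Qed.

Lemma amp_pow n : amp q s n = r ^ n.
Proof.
  unfold amp, r. rewrite <- Rpower_pow by (unfold Rpower; apply exp_pos).
  rewrite Rpower_mult. f_equal. ring.
Qed.

Lemma Rpower_q_2s : Rpower (INR q) (2 * (s - 2)) = r ^ 2.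
Proof. rewrite <- amp_pow. unfold amp. f_equal. Qed.

Lemma Rpower_q_s1 k : Rpower (INR q) (INR k * (s - 1)) = r ^ k * w k.
Proof.
  rewrite <- amp_pow. unfold amp, w. rewrite <- Rpower_pow by (pose proof INR_q_gt_1; lra).
  rewrite <- Rpower_plus. f_equal. ring.
Qed.

Lemma pow_q_double n : INR q ^ (2 * n) = w n ^ 2.
Proof. unfold w. rewrite Nat.mul_comm, pow_mult. reflexivity. Qed.

Lemma w_ge_1 n : 1 <= w n.
Proof. apply pow_R1_Rle. pose proof INR_q_gt_1; lra. Qed.

Lemma w_S_ge_2 n : 2 <= w (S n).
Proof.
  unfold w. simpl. pose proof (w_ge_1 n). unfold w in *.
  apply le_INR in Hq. simpl in Hq. nra.
Qed.

Lemma w_sub_neq0 m n : m <> n -> w m - w n <> 0.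
Proof.
  intros H. unfold w. destruct (Nat.lt_gt_cases m n) as [[Hl|Hl] _]; [lia| |];
  pose proof (Rlt_pow (INR q) _ _ INR_q_gt_1 Hl); lra.
Qed.

Lemma sin_w_PI n : sin (w n * PI) = 0.
Proof. unfold w. rewrite <- pow_INR. apply sin_cos_INR_mult_PI. Qed.

(* [w n] is an integer, even exactly when [q] is even and [n > 0]. *)
Lemma cos_w_PI n :
  cos (w n * PI) = if Nat.even q then (match n with O => -1 | S _ => 1 end) else -1.
Proof.
  unfold w. rewrite <- pow_INR, (proj2 (sin_cos_INR_mult_PI _)), pow_neg1_even.
  destruct n; [simpl; destruct (Nat.even q); reflexivity|].
  rewrite Nat.even_pow by lia. destruct (Nat.even q); reflexivity.
Qed.

(* The value of [is_RInt_x_sin_sin] at [w m], [w n]; it vanishes when [w m + w n] is even. *)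
Definition overlap m n :=
  (cos (w m * PI) * cos (w n * PI) - 1) / 2 * (/ (w m - w n) ^ 2 - / (w m + w n) ^ 2).

Lemma is_RInt_x_sin_w_sqr n : is_RInt (fun x => x * sin (w n * x) * sin (w n * x)) 0 PI (PI ^ 2 / 4).
Proof. apply is_RInt_x_sin_sqr; [pose proof (w_ge_1 n); lra | apply sin_w_PI]. Qed.

Lemma is_RInt_x_sin_w_sin_w m n : m <> n ->
  is_RInt (fun x => x * sin (w m * x) * sin (w n * x)) 0 PI (overlap m n).
Proof.
  intros H. pose proof (w_ge_1 n). pose proof (w_ge_1 m).
  apply is_RInt_x_sin_sin; auto using w_sub_neq0, sin_w_PI; lra.
Qed.

Lemma overlap_odd m n : Nat.even q = false -> overlap m n = 0.
Proof. intros H. unfold overlap. rewrite !cos_w_PI, H. unfold Rdiv; ring. Qed.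

Lemma overlap_even_S m n : Nat.even q = true -> overlap (S m) (S n) = 0.
Proof. intros H. unfold overlap. rewrite !cos_w_PI, H. unfold Rdiv; ring. Qed.

Lemma overlap_even_0 n : Nat.even q = true ->
  overlap 0 (S n) = - (/ (1 - w (S n)) ^ 2 - / (1 + w (S n)) ^ 2).
Proof.
  intros H. unfold overlap. rewrite !cos_w_PI, H. change (w 0) with 1.
  pose proof (w_S_ge_2 n). field; repeat split; lra.
Qed.

Definition re_coef t n := amp q s n * cos (INR q ^ (2 * n) * t).
Definition im_coef t n := amp q s n * sin (INR q ^ (2 * n) * t).

Lemma re_im_coef_sqr t n : re_coef t n ^ 2 + im_coef t n ^ 2 = (r ^ 2) ^ n.
Proof.
  unfold re_coef, im_coef. rewrite amp_pow.
  replace ((r ^ 2) ^ n) with ((r ^ n) ^ 2) by (rewrite <- !pow_mult; f_equal; lia).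
  pose proof (sin2_cos2 (INR q ^ (2 * n) * t)) as H. unfold Rsqr in H.
  rewrite <- (Rmult_1_r ((r ^ n) ^ 2)), <- H. ring.
Qed.

Definition cross t m :=
  psum (fun n => (re_coef t n * re_coef t m + im_coef t n * im_coef t m) * overlap n m) m.

Lemma cross_odd t m : Nat.even q = false -> cross t m = 0.
Proof.
  intros H. unfold cross. rewrite (psum_ext _ (fun _ => 0)); [apply psum_const0|].
  intros n _. rewrite overlap_odd by auto. ring.
Qed.

Lemma cross_even_S t j : Nat.even q = true -> cross t (S j) = -4 * xm_cos_term q s t j.
Proof.
  intros H. unfold cross. rewrite psum_head.
  2: { intros [|n] Hn; [lia|]. rewrite overlap_even_S by auto. ring. }
  rewrite overlap_even_0 by auto. unfold re_coef, im_coef, xm_cos_term. cbv zeta.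
  rewrite Rpower_q_s1, !amp_pow, !pow_q_double. change (w 0) with 1. change (r ^ 0) with 1.
  replace ((w (S j) ^ 2 - 1) * t) with (w (S j) ^ 2 * t - 1 ^ 2 * t) by ring.
  rewrite cos_minus. pose proof (w_S_ge_2 j). assert (4 <= w (S j) ^ 2) by nra.
  field. repeat split; lra.
Qed.

Lemma xm_cos_term_bound t j : Rabs (xm_cos_term q s t j) <= r ^ S j.
Proof.
  unfold xm_cos_term. cbv zeta. rewrite Rpower_q_s1, pow_q_double.
  pose proof (w_S_ge_2 j). pose proof r_range.
  replace (r ^ S j * w (S j) / (w (S j) ^ 2 - 1) ^ 2)
    with (r ^ S j * (w (S j) / (w (S j) ^ 2 - 1) ^ 2)) by (unfold Rdiv; ring).
  apply Rabs_mult_unit_le; [apply pow_le; lra| |apply Rabs_cos_le_1].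
  assert (HD : w (S j) <= w (S j) ^ 2 - 1) by nra.
  rewrite Rabs_pos_eq; apply div_unit_interval; simpl; nra.
Qed.

Lemma xm_sin_term_bound t j : Rabs (xm_sin_term q s t j) <= r ^ S j.
Proof.
  unfold xm_sin_term. cbv zeta. rewrite Rpower_q_s1, pow_q_double.
  pose proof (w_S_ge_2 j). pose proof r_range.
  replace (r ^ S j * w (S j) / (w (S j) ^ 2 - 1))
    with (r ^ S j * (w (S j) / (w (S j) ^ 2 - 1))) by (unfold Rdiv; ring).
  apply Rabs_mult_unit_le; [apply pow_le; lra| |apply Rabs_sin_le_1].
  assert (HD : w (S j) <= w (S j) ^ 2 - 1) by nra.
  rewrite Rabs_pos_eq; apply div_unit_interval; nra.
Qed.

Lemma cross_bound t m : Rabs (cross t m) <= 4 * r ^ m.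
Proof.
  pose proof r_range. pose proof (pow_le r m ltac:(lra)).
  destruct (Nat.even q) eqn:E.
  - destruct m as [|j]; [unfold cross; simpl; rewrite Rabs_R0; lra|].
    rewrite cross_even_S, Rabs_mult by auto. pose proof (xm_cos_term_bound t j).
    rewrite Rabs_left by lra. lra.
  - rewrite cross_odd, Rabs_R0 by auto. lra.
Qed.

Lemma amp_trig_bound n y z : Rabs y <= 1 -> Rabs (amp q s n * y * sin z) <= 1 * r ^ n.
Proof.
  intros Hy. rewrite amp_pow, Rmult_1_l. pose proof r_range.
  apply Rabs_mult_unit_le; auto using Rabs_sin_le_1. apply pow_le; lra.
Qed.

Definition re_part t x := Series (fun n => re_coef t n * sin (w n * x)).
Definition im_part t x := Series (fun n => im_coef t n * sin (w n * x)).

Lemma continuous_re_part t x : continuous (re_part t) x.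
Proof.
  apply (continuous_Series_geom_dom r r_range _ 1).
  - intros n y. apply amp_trig_bound, Rabs_cos_le_1.
  - intros n y. apply (@ex_derive_continuous R_AbsRing R_NormedModule). auto_derive. auto.
Qed.

Lemma continuous_im_part t x : continuous (im_part t) x.
Proof.
  apply (continuous_Series_geom_dom r r_range _ 1).
  - intros n y. apply amp_trig_bound, Rabs_sin_le_1.
  - intros n y. apply (@ex_derive_continuous R_AbsRing R_NormedModule). auto_derive. auto.
Qed.

Lemma Pdens_re_im_part x t : Pdens q s x t = Nc q s ^ 2 * (re_part t x ^ 2 + im_part t x ^ 2).
Proof.
  unfold Pdens, RePsi, ImPsi, re_part, im_part, re_coef, im_coef, w.
  rewrite (Series_ext (fun n => amp q s n * sin (INR q ^ n * x) * cos (INR q ^ (2 * n) * t))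
             (fun n => amp q s n * cos (INR q ^ (2 * n) * t) * sin (INR q ^ n * x))) by (intros; ring).
  rewrite (Series_ext (fun n => amp q s n * sin (INR q ^ n * x) * sin (INR q ^ (2 * n) * t))
             (fun n => amp q s n * sin (INR q ^ (2 * n) * t) * sin (INR q ^ n * x))) by (intros; ring).
  ring.
Qed.

Lemma ex_RInt_x_re_im_part t : ex_RInt (fun x => x * (re_part t x ^ 2 + im_part t x ^ 2)) 0 PI.
Proof.
  apply (@ex_RInt_continuous R_CompleteNormedModule). intros x _.
  apply continuous_x_sum_sqr; [apply continuous_re_part | apply continuous_im_part].
Qed.

Lemma x_re_im_part_psum_bound t M x : 0 <= x <= PI ->
  Rabs (x * (re_part t x ^ 2 + im_part t x ^ 2)
        - x * (sin_psum w (re_coef t) M x ^ 2 + sin_psum w (im_coef t) M x ^ 2))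
  <= PI * (6 / (1 - r) ^ 2 * r ^ M).
Proof.
  intros Hx. pose proof r_range as Hr.
  assert (Htail : forall y, (forall n, Rabs (amp q s n * y n * sin (w n * x)) <= 1 * r ^ n) ->
    Rabs (Series (fun n => amp q s n * y n * sin (w n * x)) ^ 2
          - psum (fun n => amp q s n * y n * sin (w n * x)) M ^ 2) <= 6 / (1 - r) ^ 2 * r ^ M / 2).
  { intros y Hy.
    pose proof (Series_minus_psum_geom_dom r Hr _ 1 Hy M) as HM.
    pose proof (Series_minus_psum_geom_dom r Hr _ 1 Hy 0) as H0.
    (* at [M = 0] the tail bound bounds the whole series *)
    simpl psum in H0. rewrite Rminus_0_r, pow_O in H0.
    pose proof (pow_le_1 r Hr M). pose proof (pow_le r M ltac:(lra)).
    eapply Rle_trans; [apply (Rabs_sqr_sub_le _ _ (1 * 1 / (1 - r)) (1 * r ^ M / (1 - r))); auto|].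
    - unfold Rdiv. apply Rmult_le_compat_r; [left; apply Rinv_0_lt_compat|]; lra.
    - right. field. lra. }
  replace (x * (re_part t x ^ 2 + im_part t x ^ 2) - _) with
    (x * ((re_part t x ^ 2 - sin_psum w (re_coef t) M x ^ 2)
        + (im_part t x ^ 2 - sin_psum w (im_coef t) M x ^ 2))) by ring.
  rewrite Rabs_mult, (Rabs_pos_eq x) by lra.
  apply Rmult_le_compat; [lra | apply Rabs_pos | lra |].
  eapply Rle_trans; [apply Rabs_triang|].
  pose proof (Htail (fun n => cos (INR q ^ (2 * n) * t))
                (fun n => amp_trig_bound n _ _ (Rabs_cos_le_1 _))).
  pose proof (Htail (fun n => sin (INR q ^ (2 * n) * t))
                (fun n => amp_trig_bound n _ _ (Rabs_sin_le_1 _))).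
  unfold re_part, im_part, sin_psum, re_coef, im_coef. lra.
Qed.

Definition x_wave_int t := RInt (fun x => x * (re_part t x ^ 2 + im_part t x ^ 2)) 0 PI.

Lemma x_wave_int_psum_bound t M :
  Rabs (x_wave_int t - sin_psum_sqr_int overlap (re_coef t) (im_coef t) M)
  <= PI * (PI * (6 / (1 - r) ^ 2)) * r ^ M.
Proof.
  pose proof (is_RInt_x_sin_psum_sqr w overlap is_RInt_x_sin_w_sqr is_RInt_x_sin_w_sin_w
    (re_coef t) (im_coef t) M) as Hfin.
  unfold x_wave_int. rewrite <- (is_RInt_unique _ _ _ _ Hfin).
  assert (Hex : ex_RInt (fun x => x * (sin_psum w (re_coef t) M x ^ 2
                                        + sin_psum w (im_coef t) M x ^ 2)) 0 PI) by (eexists; exact Hfin).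
  assert (E : RInt (fun x => x * (re_part t x ^ 2 + im_part t x ^ 2)) 0 PI
    - RInt (fun x => x * (sin_psum w (re_coef t) M x ^ 2 + sin_psum w (im_coef t) M x ^ 2)) 0 PI
    = RInt (fun x => x * (re_part t x ^ 2 + im_part t x ^ 2)
        - x * (sin_psum w (re_coef t) M x ^ 2 + sin_psum w (im_coef t) M x ^ 2)) 0 PI).
  { symmetry. apply (@RInt_minus R_CompleteNormedModule); [apply ex_RInt_x_re_im_part | exact Hex]. }
  rewrite E.
  eapply Rle_trans; [apply abs_RInt_le_const|].
  - pose proof PI_RGT_0; lra.
  - apply (@ex_RInt_minus R_CompleteNormedModule); [apply ex_RInt_x_re_im_part | exact Hex].
  - intros x Hx. apply x_re_im_part_psum_bound; auto.
  - rewrite Rminus_0_r. right. ring.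
Qed.

Lemma Series_re_im_coef_sqr t : Series (fun n => re_coef t n ^ 2 + im_coef t n ^ 2) = / (1 - r ^ 2).
Proof.
  rewrite (Series_ext _ (fun n => (r ^ 2) ^ n)) by apply re_im_coef_sqr.
  apply is_series_unique, is_series_geom. pose proof r_range.
  rewrite Rabs_pos_eq; simpl; nra.
Qed.

Definition x_wave_lim t := PI ^ 2 / 4 / (1 - r ^ 2) + 2 * Series (cross t).

Lemma sin_psum_sqr_int_lim_bound t M :
  Rabs (sin_psum_sqr_int overlap (re_coef t) (im_coef t) M - x_wave_lim t)
  <= (PI ^ 2 / 4 / (1 - r) + 8 / (1 - r)) * r ^ M.
Proof.
  pose proof r_range as Hr. pose proof PI_RGT_0.
  assert (Hsq : forall n, Rabs (re_coef t n ^ 2 + im_coef t n ^ 2) <= 1 * r ^ n).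
  { intros n. rewrite re_im_coef_sqr, <- pow_mult, Nat.mul_comm, pow_mult.
    pose proof (pow_le r n ltac:(lra)).
    pose proof (pow_le_1 r Hr n).
    rewrite Rabs_pos_eq by (simpl; nra). simpl. nra. }
  pose proof (Series_minus_psum_geom_dom r Hr _ 1 Hsq M) as H1.
  pose proof (Series_minus_psum_geom_dom r Hr _ 4 (cross_bound t) M) as H2.
  rewrite Series_re_im_coef_sqr in H1.
  unfold sin_psum_sqr_int, x_wave_lim. fold (cross t).
  set (A := / (1 - r ^ 2) - psum _ M) in H1. set (B := Series (cross t) - psum (cross t) M) in H2.
  replace (_ - _) with (- (PI ^ 2 / 4 * A + 2 * B)) by (unfold A, B, Rdiv; ring).
  rewrite Rabs_Ropp. eapply Rle_trans; [apply Rabs_triang|].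
  rewrite !Rabs_mult, (Rabs_pos_eq 2), (Rabs_pos_eq (PI ^ 2 / 4)) by (simpl; nra).
  replace ((PI ^ 2 / 4 / (1 - r) + 8 / (1 - r)) * r ^ M) with
    (PI ^ 2 / 4 * (1 * r ^ M / (1 - r)) + 2 * (4 * r ^ M / (1 - r))) by (field; lra).
  assert (0 <= PI ^ 2 / 4) by (simpl; nra).
  apply Rplus_le_compat; apply Rmult_le_compat_l; lra.
Qed.

Lemma x_wave_int_lim t : x_wave_int t = x_wave_lim t.
Proof.
  exact (eq_of_geom_approx r r_range _ _ _ _ _
           (x_wave_int_psum_bound t) (sin_psum_sqr_int_lim_bound t)).
Qed.

Lemma Nc_sqr : Nc q s ^ 2 = 2 / PI * (1 - r ^ 2).
Proof.
  unfold Nc. rewrite Rpower_q_2s. apply pow2_sqrt.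
  pose proof r_range. pose proof PI_RGT_0.
  apply Rmult_le_pos; [apply Rdiv_le_0_compat|]; simpl; nra.
Qed.

Lemma ex_RInt_x_Pdens t : ex_RInt (fun x => x * Pdens q s x t) 0 PI.
Proof.
  apply (ex_RInt_ext (fun x => scal (Nc q s ^ 2) (x * (re_part t x ^ 2 + im_part t x ^ 2)))).
  - intros x _. rewrite Pdens_re_im_part. unfold scal; simpl; unfold mult; simpl. ring.
  - apply (@ex_RInt_scal R_NormedModule), ex_RInt_x_re_im_part.
Qed.

Lemma xmean_cross t : xmean q s t = PI / 2 + 4 / PI * (1 - r ^ 2) * Series (cross t).
Proof.
  transitivity (Nc q s ^ 2 * x_wave_int t).
  - unfold xmean, x_wave_int.
    rewrite (RInt_ext _ (fun x => scal (Nc q s ^ 2) (x * (re_part t x ^ 2 + im_part t x ^ 2)))).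
    + apply (@RInt_scal R_CompleteNormedModule), ex_RInt_x_re_im_part.
    + intros x _. rewrite Pdens_re_im_part. unfold scal; simpl; unfold mult; simpl. ring.
  - rewrite x_wave_int_lim, Nc_sqr. unfold x_wave_lim.
    pose proof r_range. pose proof PI_RGT_0. field. split; [lra | simpl; nra].
Qed.

Lemma xmean_odd t : Nat.even q = false -> xmean q s t = PI / 2.
Proof.
  intros H. rewrite xmean_cross, (Series_ext _ (fun n => 0 * r ^ n))
    by (intros; rewrite cross_odd by auto; ring).
  rewrite Series_scal_l. ring.
Qed.

Lemma xmean_even t : Nat.even q = true ->
  xmean q s t = PI / 2 - Ccoef q s * Series (xm_cos_term q s t).
Proof.
  intros H. rewrite xmean_cross.
  assert (Hex : ex_series (cross t))
    by (apply ex_series_Rabs, (ex_series_Rabs_geom_dom r r_range _ 4), cross_bound).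
  rewrite (Series_incr_1 _ Hex), (Series_ext _ (fun j => -4 * xm_cos_term q s t j))
    by (intros; apply cross_even_S; auto).
  rewrite Series_scal_l. unfold cross at 1; simpl psum. unfold Ccoef. rewrite Rpower_q_2s.
  field. pose proof PI_RGT_0; lra.
Qed.

Lemma geom_dom_of_le_pow_S j f : Rabs f <= r ^ S j -> Rabs f <= 1 * r ^ j.
Proof. pose proof r_range. pose proof (pow_le r j ltac:(lra)). simpl. nra. Qed.

Lemma is_derive_xm_cos_term j t : is_derive (fun t => xm_cos_term q s t j) t (- xm_sin_term q s t j).
Proof.
  unfold xm_cos_term, xm_sin_term. cbv zeta. rewrite pow_q_double.
  pose proof (w_S_ge_2 j). assert (HD : 3 <= w (S j) ^ 2 - 1) by (simpl; nra).
  set (C := Rpower _ _). set (D := w (S j) ^ 2 - 1) in *.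
  auto_derive; auto. field. lra.
Qed.

Lemma is_derive_Series_xm_cos_term t :
  is_derive (fun t => Series (xm_cos_term q s t)) t (- Series (xm_sin_term q s t)).
Proof.
  rewrite <- Series_opp.
  apply (is_derive_Series_geom_dom r r_range (fun j t => xm_cos_term q s t j)
           (fun j t => - xm_sin_term q s t j) 1).
  - intros j x. apply geom_dom_of_le_pow_S, xm_cos_term_bound.
  - intros j x. rewrite Rabs_Ropp. apply geom_dom_of_le_pow_S, xm_sin_term_bound.
  - intros j x. apply is_derive_xm_cos_term.
  - intros j x. apply (@ex_derive_continuous R_AbsRing R_NormedModule).
    unfold xm_sin_term. cbv zeta. auto_derive. auto.
Qed.

Lemma is_derive_xmean t : Nat.even q = true ->
  is_derive (xmean q s) t (Ccoef q s * Series (xm_sin_term q s t)).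
Proof.
  intros H. apply (is_derive_ext (fun t => PI / 2 - Ccoef q s * Series (xm_cos_term q s t))).
  { intros t'. symmetry. apply xmean_even, H. }
  replace (Ccoef q s * Series (xm_sin_term q s t))
    with (0 - Ccoef q s * (- Series (xm_sin_term q s t))) by ring.
  apply (@is_derive_minus R_AbsRing R_NormedModule);
    [apply (@is_derive_const R_AbsRing R_NormedModule)|].
  apply is_derive_scal, is_derive_Series_xm_cos_term.
Qed.

Lemma continuous_Series_xm_sin_term t : continuous (fun t => Series (xm_sin_term q s t)) t.
Proof.
  apply (continuous_Series_geom_dom r r_range (fun j t => xm_sin_term q s t j) 1).
  - intros j x. apply geom_dom_of_le_pow_S, xm_sin_term_bound.
  - intros j x. apply (@ex_derive_continuous R_AbsRing R_NormedModule).
    unfold xm_sin_term. cbv zeta. auto_derive. auto.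
Qed.

Lemma ex_series_Rabs_xm_sin_term t : ex_series (fun j => Rabs (xm_sin_term q s t j)).
Proof.
  apply (ex_series_Rabs_geom_dom r r_range _ 1).
  intros j. apply geom_dom_of_le_pow_S, xm_sin_term_bound.
Qed.

Lemma sum_n_xm_sin_term_unif (eps : posreal) : exists N : nat, forall n t, (N <= n)%nat ->
  Rabs (sum_n (xm_sin_term q s t) n - Series (xm_sin_term q s t)) < eps.
Proof.
  destruct (psum_unif_geom_dom r r_range (fun j t => xm_sin_term q s t j) 1
              (fun j t => geom_dom_of_le_pow_S j _ (xm_sin_term_bound t j)) eps (cond_pos eps))
    as [N HN].
  exists N. intros n t Hn. rewrite <- psum_sum_n, Rabs_minus_sym. apply HN. lia.
Qed.

End Model.

Theorem mainTheorem8 (q : nat) (s : R) :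
  (2 <= q)%nat -> 0 < s < 2 ->
  (forall t, ex_RInt (fun x => x * Pdens q s x t) 0 PI) /\
  (Nat.even q = true ->
     (forall t, xmean q s t = PI / 2 - Ccoef q s * Series (xm_cos_term q s t)) /\
     (forall t, ex_derive (xmean q s) t /\ continuous (Derive (xmean q s)) t) /\
     (forall t, is_derive (xmean q s) t (Ccoef q s * Series (xm_sin_term q s t))) /\
     (forall t, ex_series (fun j => Rabs (xm_sin_term q s t j))) /\
     (forall eps : posreal, exists N : nat, forall n t, (N <= n)%nat ->
        Rabs (sum_n (xm_sin_term q s t) n - Series (xm_sin_term q s t)) < eps)) /\
  (Nat.even q = false -> forall t, xmean q s t = PI / 2).
Proof.
  intros Hq [_ Hs]. split; [|split].
  - intros t. now apply ex_RInt_x_Pdens.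
  - intros He. split; [|split; [|split; [|split]]].
    + intros t. now apply xmean_even.
    + intros t. split; [eexists; now apply is_derive_xmean|].
      apply (continuous_ext (fun t => Ccoef q s * Series (xm_sin_term q s t))).
      { intros t'. symmetry. apply is_derive_unique. now apply is_derive_xmean. }
      apply (continuous_scal_r (Ccoef q s) (fun t => Series (xm_sin_term q s t))).
      now apply continuous_Series_xm_sin_term.
    + intros t. now apply is_derive_xmean.
    + intros t. now apply ex_series_Rabs_xm_sin_term.
    + intros eps. now apply sum_n_xm_sin_term_unif.
  - intros Ho t. now apply xmean_odd.
Qed.
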